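(* Given the power cost $P\geq 0$, the MMSE estimation cost for the ZEC coding scheme is \[ S_{\mathsf{ZEC}}(P) = 0, \quad \text{for } P\geq P^*, \] where \[ P^* = \min\{ P: \mathcal{A}^0(P) \neq\varnothing\}. \]
   Context: Setting: causal-encoding, noncausal-decoding vector-valued Witsenhausen counterexample with i.i.d. source $X_0\sim\mathcal{N}(0,Q)$ and channel noise $Z_1\sim\mathcal{N}(0,N)$, $Q,N>0$; state $X_1=X_0+U_1$, channel output $Y_1=X_1+Z_1$; power cost $P=\mathbb{E}[U_1^2]$, estimation cost $S=\mathbb{E}[(X_1-U_2)^2]$. By the single-letter coordination-coding characterization, a cost pair $(P,S)$ is achievable if there are auxiliary random variables $W_1$ (independent of $X_0$) and $W_2$ (depending on $(X_0,W_1)$), both made available to the noncausal decoder, satisfying $I(W_1,W_2;Y_1)-I(W_2;X_0|W_1)\geq 0$, with the decoder using the MMSE estimate $U_2=\mathbb{E}[X_1\mid W_1,W_2,Y_1]$. The ZEC scheme, for parameters $V_1\geq 0$, $a\geq 0$: $W_1\sim\mathcal{N}(0,V_1)$ independent of $X_0$; $W_2=a\cdot\mathrm{sign}(X_0)$; $U_1=W_1+a\cdot\mathrm{sign}(X_0)-X_0$; hence $X_1=W_1+W_2$ and $Y_1=W_1+W_2+Z_1$. Its power cost is $P=V_1+Q+a^2-2a\sqrt{2Q/\pi}$, and the information constraint becomes $h(Y_1)-\tfrac12\log_2(2\pi e N)-1\geq 0$ (in bits). The admissible parameter set is \[ \mathcal{A}^0(P) = \Big\{a\geq 0:\ h(Y_1)-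 \tfrac{1}{2}\log_2(2\pi eN) \geq 1,\ \text{and } V_1 = P - \Big(Q + a^2 - 2a\sqrt{\tfrac{2Q}{\pi}}\Big)\geq 0 \Big\}, \] where $h(Y_1)$ is the differential entropy (in bits) of the Gaussian mixture density \[ f_{Y_1}(y)= \frac{1}{2\sqrt{V_1+N}}\Big[\phi\Big(\tfrac{y-a}{\sqrt{V_1+N}}\Big)+\phi\Big(\tfrac{y+a}{\sqrt{V_1+N}}\Big)\Big], \] with $\phi(x)=\frac{1}{\sqrt{2\pi}}e^{-x^2/2}$ the standard Gaussian density. *)

From HB Require Import structures.
From mathcomp Require Import all_boot all_order all_algebra.
From mathcomp Require Import all_classical all_reals all_analysis.
Set Implicit Arguments. Unset Strict Implicit. Unset Printing Implicit Defensive.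
Import Order.TTheory GRing.Theory Num.Theory.
Import numFieldNormedType.Exports.
Local Open Scope classical_set_scope.
Local Open Scope ring_scope.

Section ZEC.
Context {R : realType}.

Definition log2 (x : R) : R := ln x / ln 2.

(* Expectation of a nonnegative (extended-real) function of a centered
   Gaussian variable of VARIANCE v >= 0; v = 0 is the degenerate law at 0. *)
Definition gaussE (v : R) (f : R -> \bar R) : \bar R :=
  if v == 0 then f 0
  else (\int[lebesgue_measure]_(x in [set: R])
          ((normal_pdf 0 (Num.sqrt v) x)%:E * f x))%E.

(* The ZEC scheme with parameters (a, V1):
   X0 ~ N(0,Q), W1 ~ N(0,V1), Z1 ~ N(0,N) independent,
   W2 = a sign(X0), X1 = W1 + W2, Y1 = X1 + Z1. *)
Definition zec_cost (Q N a V1 : R) (g : R * R * R -> R) : \bar R :=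
  gaussE Q (fun x0 => gaussE V1 (fun w1 => gaussE N (fun z1 =>
    let w2 := a * Num.sg x0 in
    let x1 := w1 + w2 in
    ((x1 - g (w1, w2, x1 + z1)) ^+ 2)%:E))).

(* MMSE: E[(X1 - E[X1 | W1,W2,Y1])^2], i.e. the least estimation cost over
   all (measurable) decoders of (W1,W2,Y1). *)
Definition zec_mmse (Q N a V1 : R) : \bar R :=
  ereal_inf [set zec_cost Q N a V1 g |
              g in [set g : R * R * R -> R | measurable_fun [set: R * R * R] g]].

(* density of Y1 = W1 + a sign(X0) + Z1 *)
Definition fY1 (N a V1 : R) (y : R) : R :=
  (normal_pdf a (Num.sqrt (V1 + N)) y + normal_pdf (- a) (Num.sqrt (V1 + N)) y) / 2.

Definition hY1 (N a V1 : R) : \bar R :=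
  (\int[lebesgue_measure]_(y in [set: R])
     (- (fY1 N a V1 y * log2 (fY1 N a V1 y)))%:E)%E.

Definition zec_V1 (Q P a : R) : R :=
  P - (Q + a ^+ 2 - 2 * a * Num.sqrt (2 * Q / pi)).

Definition A0 (Q N P : R) : set R :=
  [set a | 0 <= a /\ 0 <= zec_V1 Q P a /\
     (hY1 N a (zec_V1 Q P a)
        - (log2 (2 * pi * expR 1 * N) / 2)%:E >= 1)%E].

Definition S_ZEC (Q N P : R) : \bar R :=
  ereal_inf [set zec_mmse Q N a (zec_V1 Q P a) | a in A0 Q N P].

End ZEC.

From HB Require Import structures.
From mathcomp Require Import all_boot all_order all_algebra.
From mathcomp Require Import all_classical all_reals all_analysis.
From mathcomp Require Import ring lra measurable_realfun.
Set Implicit Arguments. Unset Strict Implicit. Unset Printing Implicit Defensive.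
Import Order.TTheory GRing.Theory Num.Theory.
Local Open Scope classical_set_scope.
Local Open Scope ring_scope.

(* The decoder observes W1 and W2, hence recovers X1 = W1 + W2 exactly: every ZEC scheme
   has MMSE 0, and S_ZEC(P) = 0 as soon as A0(P) is nonempty.  Raising the power from Pstar
   to P >= Pstar with the same a only adds P - Pstar to V1, i.e. replaces Y1 by Y1 + G with
   G ~ N(0, P - Pstar) independent of Y1.  By concavity of -x log x, Jensen's inequality in G,
   Fubini and translation invariance of Lebesgue measure give h(Y1 + G) >= h(Y1), so every a
   admissible for Pstar remains admissible for P. *)

Section xlnx.
Context {R : realType}.
Implicit Types x y m : R.

Lemma ln_le_subr1 x : 0 < x -> ln x <= x - 1.
Proof. by move=> x0; have := @le_ln1Dx R (x - 1); rewrite [1 + _]addrC subrK; apply; lra. Qed.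

Lemma xlnx_tangent x m : 0 <= x -> 0 < m -> - (x * ln x) <= m - x - x * ln m.
Proof.
move=> x0 m0; have [->|xn0] := eqVneq x 0; first by rewrite !mul0r oppr0 !addr0 ltW.
have xp : 0 < x by rewrite lt_def xn0.
have : x * (ln m - ln x) <= x * (m / x - 1).
  by rewrite ler_pM2l // -ln_div ?posrE // ln_le_subr1 // divr_gt0.
by rewrite !mulrBr mulrCA divff // mulr1; lra.
Qed.

Lemma sqrtrD_le x y : 0 <= x -> 0 <= y -> Num.sqrt (x + y) <= Num.sqrt x + Num.sqrt y.
Proof.
move=> x0 y0; rewrite -ler_sqr ?nnegrE ?addr_ge0 ?sqrtr_ge0 //.
rewrite sqrrD !sqr_sqrtr ?addr_ge0 // -addrA lerD2l lerDr.
by rewrite mulrn_wge0 // mulr_ge0 ?sqrtr_ge0.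
Qed.

Lemma normr_xlnx_le x : 0 <= x -> `|x * ln x| <= 2 * Num.sqrt x + x ^+ 2.
Proof.
move=> x0; have [->|xn0] := eqVneq x 0.
  by rewrite mul0r normr0 sqrtr0 expr0n /= mulr0 addr0.
have xp : 0 < x by rewrite lt_def xn0.
have sx0 : 0 < Num.sqrt x by rewrite sqrtr_gt0.
have [x1|x1] := leP x 1; last first.
  rewrite ger0_norm; last by rewrite mulr_ge0 // ln_ge0 // ltW.
  have := ln_sublinear xp; have : 0 <= ln x by rewrite ln_ge0 // ltW.
  by rewrite expr2; nra.
rewrite ler0_norm; last by rewrite mulr_ge0_le0 // ln_le0.
have lnE : ln x = 2 * ln (Num.sqrt x) by rewrite -{1}(sqr_sqrtr x0) lnXn // mulr_natl.
have lnV_le : - ln (Num.sqrt x) <= (Num.sqrt x)^-1 - 1.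
  by rewrite -lnV ?posrE // ln_le_subr1 // invr_gt0.
have xVsqrt : x / Num.sqrt x = Num.sqrt x.
  by rewrite -{1}(sqr_sqrtr x0) expr2 mulfK ?gt_eqF.
have : - x * ln (Num.sqrt x) <= x * ((Num.sqrt x)^-1 - 1).
  by rewrite mulNr -mulrN ler_pM2l.
rewrite mulrBr xVsqrt mulr1 lnE.
have := sqr_ge0 x; nra.
Qed.

End xlnx.

Section entropy_density.
Context {R : realType}.
Implicit Types x m K : R.

Definition entropy_density (x : R) : R := - (x * log2 x).

Lemma ln2_gt0 : 0 < ln (2 : R).
Proof. by rewrite ln_gt0 // ltr1n. Qed.

Lemma entropy_densityE x : entropy_density x = - (x * ln x) / ln 2.
Proof. by rewrite /entropy_density /log2 mulNr mulrA. Qed.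

Lemma measurable_entropy_density : measurable_fun [set: R] entropy_density.
Proof.
apply: measurable_funN; apply: measurable_funM => //.
by apply: measurable_funM => //; exact: measurable_ln.
Qed.

Lemma normr_entropy_density_le x K : 0 <= x -> x <= K ->
  `|entropy_density x| <= (2 * Num.sqrt x + K * x) / ln 2.
Proof.
move=> x0 xK; rewrite entropy_densityE normrM normrN gtr0_norm ?invr_gt0 ?ln2_gt0 //.
rewrite ler_pM2r ?invr_gt0 ?ln2_gt0 //; apply: le_trans (normr_xlnx_le x0) _.
by rewrite lerD2l expr2 ler_wpM2r.
Qed.

Lemma entropy_density_tangent x m : 0 <= x -> 0 < m ->
  entropy_density x <= (m - x - x * ln m) / ln 2.
Proof.
move=> x0 m0; rewrite entropy_densityE ler_pM2r ?invr_gt0 ?ln2_gt0 //.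
exact: xlnx_tangent.
Qed.

End entropy_density.

Section bounded_times_integrable.
Local Open Scope ereal_scope.
Context d (T : measurableType d) (R : realType) (mu : {measure set T -> \bar R}).

Lemma integrable_bounded_mul (h k : T -> R) (B : R) :
  measurable_fun [set: T] h -> (forall t, `|h t| <= B)%R ->
  mu.-integrable [set: T] (fun t => (k t)%:E) ->
  mu.-integrable [set: T] (fun t => (h t * k t)%:E).
Proof.
move=> mh hB ki; have hbnd : [bounded h t | t in [set: T]].
  by exists B; split; [exact: num_real | move=> M BM t _; exact: le_trans (hB t) (ltW BM)].
have := integrableMr measurableT mh hbnd ki.
by apply: eq_integrable => // t _; rewrite EFinM.
Qed.

End bounded_times_integrable.

Section entropy_integral.
Local Open Scope ereal_scope.
Context d (T : measurableType d) (R : realType) (mu : {measure set T -> \bar R}).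
Variables (f : T -> R) (K : R).
Hypotheses (mf : measurable_fun [set: T] f) (f_ge0 : forall t, (0 <= f t)%R)
  (f_le : forall t, (f t <= K)%R).

Lemma integrable_entropy_density :
  mu.-integrable [set: T] (fun t => (f t)%:E) ->
  mu.-integrable [set: T] (fun t => (Num.sqrt (f t))%:E) ->
  mu.-integrable [set: T] (fun t => (entropy_density (f t))%:E).
Proof.
move=> fi sfi; have : mu.-integrable [set: T]
    (fun t => ((2 / ln 2)%R%:E * (Num.sqrt (f t))%:E + (K / ln 2)%R%:E * (f t)%:E)).
  by apply: integrableD => //; exact: integrableZl.
apply: le_integrable => //.
  by apply/measurable_EFinP; apply: measurableT_comp => //; exact: measurable_entropy_density.
move=> t _; rewrite -!EFinM -EFinD !abse_EFin lee_fin.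
apply: le_trans (normr_entropy_density_le (f_ge0 t) (f_le t)) _.
by rewrite mulrDl (mulrAC 2%R) (mulrAC K); exact: ler_norm.
Qed.

Lemma entropy_density_jensen (k : T -> R) (w : R) :
  mu.-integrable [set: T] (fun t => (k t)%:E) -> (forall t, 0 <= k t)%R ->
  \int[mu]_t (k t)%:E = 1 ->
  \int[mu]_t (f t * k t)%:E = w%:E -> (0 < w)%R ->
  \int[mu]_t (entropy_density (f t) * k t)%:E <= (entropy_density w)%:E.
Proof.
move=> ki k_ge0 k1 fkw w0; have l2 := @ln2_gt0 R.
have K0 : (0 <= K)%R by exact: le_trans (f_ge0 point) (f_le point).
have fki : mu.-integrable [set: T] (fun t => (f t * k t)%:E).
  by apply: (integrable_bounded_mul (B := K)) => // t; rewrite ger0_norm.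
have hki : mu.-integrable [set: T] (fun t => (entropy_density (f t) * k t)%:E).
  apply: (integrable_bounded_mul (B := (2 * Num.sqrt K + K * K) / ln 2)) => //.
    by apply: measurableT_comp => //; exact: measurable_entropy_density.
  move=> t; apply: le_trans (normr_entropy_density_le (f_ge0 t) (f_le t)) _.
  by rewrite ler_pM2r ?invr_gt0 // lerD ?ler_wpM2l ?ler_wpM2r ?ler_wsqrtr.
set a := (w / ln 2)%R; set b := (- ((1 + ln w) / ln 2))%R.
have tangent_int : \int[mu]_t (entropy_density (f t) * k t)%:E <=
    \int[mu]_t (a%:E * (k t)%:E + b%:E * (f t * k t)%:E).
  apply: le_integral => //; first by apply: integrableD => //; exact: integrableZl.
  move=> t _; rewrite -!EFinM -EFinD lee_fin.
  have -> : (a * k t + b * (f t * k t) = (w - f t - f t * ln w) / ln 2 * k t)%R.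
    by rewrite /a /b; field; rewrite gt_eqF.
  by rewrite ler_wpM2r // entropy_density_tangent.
apply: (le_trans tangent_int); rewrite integralD //; last 2 first.
- exact: integrableZl.
- exact: integrableZl.
rewrite !integralZl // k1 fkw mule1 -EFinM -EFinD lee_fin.
suff -> : (a + b * w)%R = entropy_density w by [].
by rewrite entropy_densityE /a /b; field; rewrite gt_eqF.
Qed.

End entropy_integral.

Section translation_invariance.
Local Open Scope ereal_scope.
Context {R : realType}.
Local Notation mu := (@lebesgue_measure R).
Implicit Types (c : R) (h : R -> \bar R).

Let shift c : R -> measurableTypeR R := fun y => (y - c)%R.

Let measurable_shift c : measurable_fun [set: R] (shift c).
Proof. exact: measurable_funD. Qed.

Let pushforward_shift c A : measurable A -> pushforward mu (shift c) A = mu A.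
Proof.
move=> mA; apply/esym/lebesgue_measure_unique => //=; first exact: measurable_shift.
move=> _ _ [[x1 x2] _ <-]; rewrite /pushforward.
have -> : shift c @^-1` `]x1, x2]%classic = `](x1 + c)%R, (x2 + c)%R]%classic.
  by apply/seteqP; split => y; rewrite /shift /= !in_itv /= => /andP[lo hi]; apply/andP; split; lra.
rewrite !lebesgue_measure_itv /= !lte_fin ltrD2r; case: ifP => // _.
by rewrite -!EFinD; congr (_%:E); ring.
Qed.

Let integral_pushforward_shift c h : \int[mu]_y h y = \int[pushforward mu (shift c)]_y h y.
Proof.
apply: eq_measure_integral; first exact: measurable_shift.
by move=> mf A mA _; exact/esym/pushforward_shift.
Qed.

Lemma ge0_integral_shift c h : measurable_fun [set: R] h -> (forall y, 0 <= h y) ->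
  \int[mu]_y h (y - c)%R = \int[mu]_y h y.
Proof.
move=> mh h0; rewrite [RHS](integral_pushforward_shift c) ge0_integral_pushforward //.
exact: measurable_shift.
Qed.

Lemma integrable_shift c h : mu.-integrable [set: R] h ->
  mu.-integrable [set: R] (fun y => h (y - c)%R).
Proof.
move=> /integrableP[mh hi]; apply/integrableP; split.
  exact: (measurableT_comp mh (measurable_shift c)).
by rewrite (@ge0_integral_shift c (fun y => `|h y|)) //; exact: measurableT_comp.
Qed.

Lemma integral_shift c h : mu.-integrable [set: R] h ->
  \int[mu]_y h (y - c)%R = \int[mu]_y h y.
Proof.
move=> hi; rewrite [RHS](integral_pushforward_shift c) integral_pushforward //.
- exact: measurable_shift.
- exact: measurable_int hi.
- exact: integrable_shift.
Qed.

End translation_invariance.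

Section convolution.
Local Open Scope ereal_scope.
Context {R : realType}.
Local Notation mu := (@lebesgue_measure R).
Variables (h k : R -> R).
Hypotheses (hi : mu.-integrable [set: R] (fun y => (h y)%:E))
  (ki : mu.-integrable [set: R] (fun y => (k y)%:E)).

Let mh : measurable_fun [set: R] h.
Proof. by apply/measurable_EFinP; exact: measurable_int hi. Qed.

Let mk : measurable_fun [set: R] k.
Proof. by apply/measurable_EFinP; exact: measurable_int ki. Qed.

Let integral_abs_lty f : mu.-integrable [set: R] (fun y => (f y)%:E) ->
  \int[mu]_y `|f y|%:E < +oo.
Proof. by case/integrableP => _; under eq_integral do rewrite abse_EFin. Qed.

Lemma integrable_convolution :
  (mu \x mu).-integrable [set: R * R] (fun z => (h (z.1 - z.2) * k z.2)%:E).
Proof.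
apply/integrable21ltyP.
  apply/measurable_EFinP; apply: measurable_funM.
    by apply: measurableT_comp mh _; exact: measurable_funB.
  exact: measurableT_comp mk measurable_snd.
have inner g : \int[mu]_y `|(h (y - g) * k g)%:E| = \int[mu]_y `|h y|%:E * `|k g|%:E.
  under eq_integral do rewrite abse_EFin normrM EFinM.
  rewrite ge0_integralZr //; last first.
    apply/measurable_EFinP/measurableT_comp => //.
    by apply: measurableT_comp mh _; exact: measurable_funB.
  congr (_ * _); apply: (@ge0_integral_shift _ g (fun y => `|h y|%:E)) => //.
  exact/measurable_EFinP/measurableT_comp.
rewrite /=; under eq_integral do rewrite inner.
rewrite ge0_integralZl //; last 2 first.
- by apply/measurable_EFinP; exact: measurableT_comp.
- exact: integral_ge0.
apply: lte_mul_pinfty; first exact: integral_ge0.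
  by rewrite ge0_fin_numE ?integral_ge0 // integral_abs_lty.
exact: integral_abs_lty.
Qed.

Lemma integral_convolution :
  \int[mu]_y \int[mu]_g (h (y - g) * k g)%:E =
  \int[mu]_y (h y)%:E * \int[mu]_g (k g)%:E.
Proof.
have := Fubini integrable_convolution; rewrite /= => ->.
have Hfin := integrable_fin_num measurableT hi.
under eq_integral => g _.
  rewrite (_ : \int[mu]_y _ = \int[mu]_y (h y)%:E * (k g)%:E); first over.
  under eq_integral do rewrite EFinM.
  rewrite integralZr //; last exact: (integrable_shift g hi).
  by congr (_ * _); exact: (integral_shift g hi).
by rewrite /= -(fineK Hfin) integralZl.
Qed.

End convolution.

(* [v] is the variance, as in [gaussE] and [fY1] *)
Notation gauss_pdf m v := (normal_pdf m (Num.sqrt v)).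

Section gaussian_density.
Context {R : realType}.
Implicit Types m v s d x y g : R.
Local Notation mu := (@lebesgue_measure R).

Definition gauss_peak v : R := (Num.sqrt (v * pi *+ 2))^-1.

Lemma gauss_peak_gt0 v : 0 < v -> 0 < gauss_peak v.
Proof. by move=> v0; rewrite invr_gt0 sqrtr_gt0 pmulrn_lgt0 // mulr_gt0 // pi_gt0. Qed.

Lemma gauss_pdfE m v x : 0 < v ->
  gauss_pdf m v x = gauss_peak v * expR (- (x - m) ^+ 2 / (v *+ 2)).
Proof.
move=> v0; rewrite normal_pdfE; last by rewrite gt_eqF ?sqrtr_gt0.
by rewrite /normal_peak /normal_fun sqr_sqrtr // ltW.
Qed.

Lemma gauss_pdf_gt0 m v x : 0 < v -> 0 < gauss_pdf m v x.
Proof. by move=> v0; rewrite gauss_pdfE // mulr_gt0 ?expR_gt0 ?gauss_peak_gt0. Qed.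

Lemma gauss_pdf_le_peak m v x : 0 < v -> gauss_pdf m v x <= gauss_peak v.
Proof.
move=> v0; rewrite gauss_pdfE // -[leRHS]mulr1 ler_wpM2l //.
  exact/ltW/gauss_peak_gt0.
by rewrite expR_le1 mulNr oppr_le0 divr_ge0 ?sqr_ge0 // mulrn_wge0 // ltW.
Qed.

Lemma sqrt_gauss_pdf m v x : 0 < v ->
  Num.sqrt (gauss_pdf m v x) =
  Num.sqrt (gauss_peak v) / gauss_peak (v *+ 2) * gauss_pdf m (v *+ 2) x.
Proof.
move=> v0; have v20 : 0 < v *+ 2 by rewrite pmulrn_lgt0.
rewrite !gauss_pdfE // mulrA divfK ?gt_eqF ?gauss_peak_gt0 //.
rewrite sqrtrM ?ltW ?gauss_peak_gt0 //; congr (_ * _).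
have -> : - (x - m) ^+ 2 / (v *+ 2) = - (x - m) ^+ 2 / (v *+ 2 *+ 2) * 2%:R.
  by field; rewrite gt_eqF.
by rewrite expRM_natr sqrtr_sqr ger0_norm ?expR_ge0.
Qed.

(* completing the square in g *)
Lemma gauss_pdf_shift_mul m s d y g : 0 < s -> 0 < d ->
  gauss_pdf m s (y - g) * gauss_pdf 0 d g =
  gauss_pdf m (s + d) y * gauss_pdf ((y - m) * d / (s + d)) (s * d / (s + d)) g.
Proof.
move=> s0 d0; have sd0 : 0 < s + d by rewrite addr_gt0.
rewrite !gauss_pdfE ?divr_gt0 ?mulr_gt0 // mulrACA [RHS]mulrACA -!expRD.
rewrite /gauss_peak -!invfM -!sqrtrM ?mulrn_wge0 ?mulr_ge0 ?pi_ge0 ?ltW //.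
congr (_^-1 * expR _).
  by congr Num.sqrt; move: (pi) => p; field; rewrite gt_eqF.
by field; rewrite !gt_eqF.
Qed.

Lemma integrable_gauss_conv m s d y : 0 < s -> 0 < d ->
  mu.-integrable [set: R] (fun g => (gauss_pdf m s (y - g) * gauss_pdf 0 d g)%:E).
Proof.
move=> s0 d0.
have := integrableZl measurableT (gauss_pdf m (s + d) y)
  (integrable_normal_pdf ((y - m) * d / (s + d)) (Num.sqrt (s * d / (s + d)))).
by apply: eq_integrable => // g _; rewrite gauss_pdf_shift_mul // EFinM.
Qed.

Lemma gauss_conv m s d y : 0 < s -> 0 < d ->
  (\int[mu]_g (gauss_pdf m s (y - g) * gauss_pdf 0 d g)%:E = (gauss_pdf m (s + d) y)%:E)%E.
Proof.
move=> s0 d0; under eq_integral do rewrite gauss_pdf_shift_mul // EFinM.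
by rewrite integralZl ?integral_normal_pdf ?mule1 //; exact: integrable_normal_pdf.
Qed.

(* the density [fY1 N a V1] of Y1 is [mixture_pdf a (V1 + N)] *)
Definition mixture_pdf (a v y : R) : R := (gauss_pdf a v y + gauss_pdf (- a) v y) / 2.

Lemma mixture_pdf_gt0 a v y : 0 < v -> 0 < mixture_pdf a v y.
Proof. by move=> v0; rewrite divr_gt0 // addr_gt0 // gauss_pdf_gt0. Qed.

Lemma mixture_pdf_le_peak a v y : 0 < v -> mixture_pdf a v y <= gauss_peak v.
Proof.
move=> v0; have := gauss_pdf_le_peak a y v0; have := gauss_pdf_le_peak (- a) y v0.
by rewrite /mixture_pdf; lra.
Qed.

Lemma measurable_mixture_pdf a v : measurable_fun [set: R] (mixture_pdf a v).
Proof.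
by apply: measurable_funM => //; apply: measurable_funD; exact: measurable_normal_pdf.
Qed.

Lemma integrable_mixture_pdf a v :
  mu.-integrable [set: R] (fun y => (mixture_pdf a v y)%:E).
Proof.
have := integrableZl measurableT (2^-1)
  (integrableD measurableT (integrable_normal_pdf a (Num.sqrt v))
                           (integrable_normal_pdf (- a) (Num.sqrt v))).
by apply: eq_integrable => // y _; rewrite /mixture_pdf mulrC EFinM EFinD.
Qed.

Lemma sqrt_mixture_pdf_le a v y : 0 < v ->
  Num.sqrt (mixture_pdf a v y) <=
  2 * (Num.sqrt (gauss_peak v) / gauss_peak (v *+ 2)) * mixture_pdf a (v *+ 2) y.
Proof.
move=> v0; rewrite /mixture_pdf -mulrA mulrCA [2 * _]mulrC divfK ?pnatr_eq0 //.
rewrite mulrDr -!sqrt_gauss_pdf //.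
apply: le_trans (sqrtrD_le (normal_pdf_ge0 _ _ _) (normal_pdf_ge0 _ _ _)).
rewrite ler_wsqrtr // ler_pdivrMr // ler_pMr ?ler1n //.
by rewrite addr_gt0 ?gauss_pdf_gt0.
Qed.

Lemma integrable_sqrt_mixture_pdf a v : 0 < v ->
  mu.-integrable [set: R] (fun y => (Num.sqrt (mixture_pdf a v y))%:E).
Proof.
move=> v0; have := integrableZl measurableT
  (2 * (Num.sqrt (gauss_peak v) / gauss_peak (v *+ 2))) (integrable_mixture_pdf a (v *+ 2)).
apply: le_integrable => //.
  apply/measurable_EFinP.
  exact: measurableT_comp (continuous_measurable_fun (@sqrt_continuous R))
                          (measurable_mixture_pdf a v).
move=> y _; rewrite -EFinM !abse_EFin lee_fin ger0_norm ?sqrtr_ge0 //.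
exact: le_trans (sqrt_mixture_pdf_le a y v0) (ler_norm _).
Qed.

Lemma mixture_conv a s d y : 0 < s -> 0 < d ->
  (\int[mu]_g (mixture_pdf a s (y - g) * gauss_pdf 0 d g)%:E
   = (mixture_pdf a (s + d) y)%:E)%E.
Proof.
move=> s0 d0.
under eq_integral do rewrite /mixture_pdf mulrAC mulrDl EFinM EFinD.
rewrite integralZr ?integralD ?gauss_conv //; last first.
  by apply: integrableD => //; exact: integrable_gauss_conv.
all: exact: integrable_gauss_conv.
Qed.

End gaussian_density.

Section mixture_entropy.
Local Open Scope ereal_scope.
Context {R : realType}.
Local Notation mu := (@lebesgue_measure R).

Lemma integrable_mixture_entropy a v : (0 < v)%R ->
  mu.-integrable [set: R] (fun y => (entropy_density (mixture_pdf a v y))%:E).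
Proof.
move=> v0; apply: (@integrable_entropy_density _ _ _ _ _ (gauss_peak v)).
- exact: measurable_mixture_pdf.
- by move=> y; exact/ltW/mixture_pdf_gt0.
- by move=> y; exact: mixture_pdf_le_peak.
- exact: integrable_mixture_pdf.
- exact: integrable_sqrt_mixture_pdf.
Qed.

Lemma mixture_entropy_conv_le a s d y : (0 < s)%R -> (0 < d)%R ->
  \int[mu]_g (entropy_density (mixture_pdf a s (y - g)) * gauss_pdf 0 d g)%:E
  <= (entropy_density (mixture_pdf a (s + d) y))%:E.
Proof.
move=> s0 d0; apply: (@entropy_density_jensen _ _ _ _ _ (gauss_peak s)).
- apply: measurableT_comp; first exact: measurable_mixture_pdf.
  exact: measurable_funB.
- by move=> g; exact/ltW/mixture_pdf_gt0.
- by move=> g; exact: mixture_pdf_le_peak.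
- exact: integrable_normal_pdf.
- by move=> g; exact: normal_pdf_ge0.
- exact: integral_normal_pdf.
- exact: mixture_conv.
- by apply: mixture_pdf_gt0; rewrite addr_gt0.
Qed.

Lemma mixture_entropy_le a s t : (0 < s)%R -> (s <= t)%R ->
  \int[mu]_y (entropy_density (mixture_pdf a s y))%:E <=
  \int[mu]_y (entropy_density (mixture_pdf a t y))%:E.
Proof.
move=> s0; rewrite le_eqVlt => /predU1P[<- //|st].
have d0 : (0 < t - s)%R by rewrite subr_gt0.
have -> : t = (s + (t - s))%R by rewrite addrC subrK.
set d := (t - s)%R.
have hi := integrable_mixture_entropy a s0.
have ki := integrable_normal_pdf 0 (Num.sqrt d).
rewrite -[leLHS]mule1 -(integral_normal_pdf 0 (Num.sqrt d)) -integral_convolution //.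
apply: le_integral => //.
- exact: integrable_fubini_F (integrable_convolution hi ki).
- by apply: integrable_mixture_entropy; rewrite addr_gt0.
- by move=> y _; exact: mixture_entropy_conv_le.
Qed.

End mixture_entropy.

Section zec.
Local Open Scope ereal_scope.
Context {R : realType}.
Implicit Types (Q N P a V : R) (f : R -> \bar R).

Lemma hY1_le N a V V' : (0 < V + N)%R -> (V <= V')%R -> hY1 N a V <= hY1 N a V'.
Proof.
move=> VN VV'; have VNV'N : (V + N <= V' + N)%R by rewrite lerD2r.
exact: (mixture_entropy_le a VN VNV'N).
Qed.

Lemma A0_monotone Q N P P' : (0 < N)%R -> (P <= P')%R -> A0 Q N P `<=` A0 Q N P'.
Proof.
move=> N0 PP' a [a0 [V0 ha]].
have VV' : (zec_V1 Q P a <= zec_V1 Q P' a)%R by rewrite /zec_V1 lerD2r.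
split; [exact: a0 | split; first exact: le_trans V0 VV'].
apply: le_trans ha (leeD2r _ (hY1_le _ _ VV')).
by rewrite ltr_wpDl.
Qed.

Lemma gaussE_ge0 V f : (forall x, 0 <= f x) -> 0 <= gaussE V f.
Proof.
move=> f0; rewrite /gaussE; case: ifP => _; first exact: f0.
by apply: integral_ge0 => x _; rewrite mule_ge0 // lee_fin normal_pdf_ge0.
Qed.

Lemma gaussE_eq0 V f : (forall x, f x = 0) -> gaussE V f = 0.
Proof.
move=> f0; rewrite /gaussE; case: ifP => _; first exact: f0.
by under eq_integral do rewrite f0 mule0; exact: integral0.
Qed.

Lemma zec_mmse_eq0 Q N a V : zec_mmse Q N a V = 0.
Proof.
apply/eqP; rewrite eq_le; apply/andP; split.
  apply: ereal_inf_lbound; exists (fun p : R * R * R => p.1.1 + p.1.2)%R.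
    by apply: measurable_funD; apply: measurableT_comp measurable_fst.
  apply: gaussE_eq0 => x0; apply: gaussE_eq0 => w1; apply: gaussE_eq0 => z1.
  by rewrite /= subrr expr0n.
apply: le_ereal_inf_tmp => _ [g _ <-].
apply: gaussE_ge0 => x0; apply: gaussE_ge0 => w1; apply: gaussE_ge0 => z1.
by rewrite lee_fin sqr_ge0.
Qed.

Lemma S_ZEC_eq0 Q N P : A0 Q N P !=set0 -> S_ZEC Q N P = 0.
Proof.
move=> /set0P/negPf A0_neq0; rewrite /S_ZEC (eq_imagel (f' := fun=> 0)).
  by rewrite set_cst A0_neq0 ereal_inf1.
by move=> a _; exact: zec_mmse_eq0.
Qed.

End zec.

Theorem theorem3 (R : realType) (Q N Pstar P : R) :
  0 < Q -> 0 < N ->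
  (* Pstar = min { P : A^0(P) <> empty } *)
  A0 Q N Pstar !=set0 ->
  (forall P' : R, A0 Q N P' !=set0 -> Pstar <= P') ->
  0 <= P -> Pstar <= P ->
  S_ZEC Q N P = 0%E.
Proof.
move=> _ N0 [a Aa] _ _ PstarP.
by apply: S_ZEC_eq0; exists a; exact: A0_monotone N0 PstarP _ Aa.
Qed.
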